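(* Let $p>0$ be a real number and let $n=\lceil p\rceil$. Then the power function $\Phi:\mathbb{R}_+\to\mathbb{R}_+$, $\Phi(x)=x^p$, is subadditive of order $n$.
   Context: $\mathbb{R}_+$ denotes the set of nonnegative real numbers. For $n\in\mathbb{N}$ and an interval $I\subseteq\mathbb{R}_+$, a function $\Phi: I\to\mathbb{R}_+$ is called subadditive of order $n$ if for all $x,y\in I$ with $y>0$ and $x+y\in I$ one has $\Phi(x+y)\leq \Phi(x)+\frac{(x+y)^n-x^n}{y^n}\Phi(y)$. *)

From Stdlib Require Import Reals Lra.
Open Scope R_scope.

(* Power function x |-> x^p on R_+ for real exponent p > 0, with 0^p = 0.
   (Stdlib's Rpower x p = exp (p * ln x) is only meaningful for x > 0.) *)
Definition rpow (x p : R) : R := if Req_EM_T x 0 then 0 else Rpower x p.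

Definition subadditive_of_order_Rplus (n : nat) (Phi : R -> R) : Prop :=
  (forall x, 0 <= x -> 0 <= Phi x) /\
  (forall x y, 0 <= x -> 0 < y ->
     Phi (x + y) <= Phi x + ((x + y) ^ n - x ^ n) / (y ^ n) * Phi y).

(* By homogeneity it suffices to take y = 1. *)

From Stdlib Require Import Reals Lra.
Open Scope R_scope.

Lemma Rpower_1_l (c : R) : Rpower 1 c = 1.
Proof. unfold Rpower. now rewrite ln_1, Rmult_0_r, exp_0. Qed.

Lemma Rpower_pos (x p : R) : 0 < Rpower x p.
Proof. exact (exp_pos _). Qed.

Lemma Rpower_le_1 (r c : R) : 0 < r <= 1 -> 0 <= c -> Rpower r c <= 1.
Proof.
  intros Hr Hc. rewrite <- (Rpower_1_l c). now apply Rle_Rpower_l.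
Qed.

Lemma Rpower_antitone_exponent (r a b : R) :
  0 < r <= 1 -> a <= b -> Rpower r b <= Rpower r a.
Proof.
  intros Hr Hab.
  replace b with ((b - a) + a) by ring. rewrite Rpower_plus.
  assert (Hba : Rpower r (b - a) <= 1) by (apply Rpower_le_1; lra).
  pose proof (Rpower_pos r a). nra.
Qed.

Lemma Rpower_increment_le_pow_increment (p t : R) (n : nat) :
  0 <= p <= INR n -> 0 < t ->
  Rpower (1 + t) p - Rpower t p <= (1 + t) ^ n - t ^ n.
Proof.
  intros Hp Ht.
  set (A := 1 + t). set (r := t / A).
  assert (HA : 1 <= A) by (unfold A; lra).
  assert (Et : t = A * r) by (unfold r; field; unfold A; lra).
  assert (Hr : 0 < r <= 1) by (unfold A in *; split; nra).
  rewrite Et, <- Rpower_mult_distr, Rpow_mult_distr by lra.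
  assert (HAp : Rpower A p <= A ^ n).
  { rewrite <- Rpower_pow by lra. now apply Rle_Rpower. }
  assert (Hrn : r ^ n <= Rpower r p).
  { rewrite <- Rpower_pow by lra. now apply Rpower_antitone_exponent. }
  assert (Hrp : Rpower r p <= 1) by (apply Rpower_le_1; lra).
  pose proof (Rpower_pos A p).
  nra.
Qed.

Lemma Rpower_increment_le (p x y : R) (n : nat) :
  0 <= p <= INR n -> 0 < x -> 0 < y ->
  Rpower (x + y) p - Rpower x p <= ((x + y) ^ n - x ^ n) / y ^ n * Rpower y p.
Proof.
  intros Hp Hx Hy.
  set (t := x / y).
  assert (Ht : 0 < t) by (apply Rdiv_lt_0_compat; lra).
  assert (Ex : x = y * t) by (unfold t; field; lra).
  assert (Exy : x + y = y * (1 + t)) by (rewrite Ex; ring).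
  assert (Hyn : 0 < y ^ n) by (apply pow_lt; lra).
  rewrite Exy, Ex, <- !Rpower_mult_distr, !Rpow_mult_distr by lra.
  replace ((y ^ n * (1 + t) ^ n - y ^ n * t ^ n) / y ^ n)
    with ((1 + t) ^ n - t ^ n) by (field; lra).
  pose proof (Rpower_increment_le_pow_increment p t n Hp Ht).
  pose proof (Rpower_pos y p).
  nra.
Qed.

Lemma rpow_0_l (p : R) : rpow 0 p = 0.
Proof. unfold rpow. now destruct (Req_EM_T 0 0). Qed.

Lemma rpow_pos_l (x p : R) : 0 < x -> rpow x p = Rpower x p.
Proof. intros Hx. unfold rpow. destruct (Req_EM_T x 0); [lra | easy]. Qed.

Lemma rpow_nonneg (x p : R) : 0 <= rpow x p.
Proof.
  unfold rpow. destruct (Req_EM_T x 0); [lra | left; apply Rpower_pos].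
Qed.

Theorem corollary2p2 (p : R) (n : nat) :
  0 < p -> INR n - 1 < p <= INR n ->
  subadditive_of_order_Rplus n (fun x => rpow x p).
Proof.
  intros Hp [_ Hpn]. split; [intros x _; apply rpow_nonneg|].
  intros x y Hx Hy.
  rewrite (rpow_pos_l y), (rpow_pos_l (x + y)) by lra.
  destruct (Req_dec x 0) as [->|Hx0].
  - destruct n as [|m]; [simpl in Hpn; lra|].
    assert (Hyn : 0 < y ^ S m) by (apply pow_lt; lra).
    rewrite rpow_0_l, Rplus_0_l, pow_i by apply Nat.lt_0_succ.
    replace ((y ^ S m - 0) / y ^ S m) with 1 by (field; lra).
    lra.
  - rewrite rpow_pos_l by lra.
    pose proof (Rpower_increment_le p x y n ltac:(lra) ltac:(lra) Hy).
    lra.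
Qed.
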